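(* Let $2<\alpha<4$ and $c\ge 1$. For $N_1>0$ set $N_2=cN_1$, and let $(\Lambda_1^*,\Lambda_2^* )$ be the Nash equilibrium of the two-player Random Access Game in which player $i\in\{1,2\}$ chooses $\Lambda_i\in[0,N_i]$ and receives payoff \[ U_i(\Lambda_1,\Lambda_2)=\sup_{\beta>0}\ \Lambda_i\log(1+\beta)\,e^{-(\Lambda_1+\Lambda_2)\beta^{2/\alpha}} . \] Then, in the limit $N_1\to\infty$, the equilibrium is \[ (\Lambda_1^*,\Lambda_2^* )=\begin{cases}(N_1,N_2), & N_1\le N_2\le \frac{2}{\alpha-2}N_1,\\[2pt] \left(N_1,\frac{2}{\alpha-2}N_1\right), & \frac{2}{\alpha-2}N_1\le N_2,\end{cases} \] in the sense that $\Lambda_1^*=N_1$ and $\Lambda_2^*/N_1\to\min\!\left(c,\frac{2}{\alpha-2}\right)$ as $N_1\to\infty$.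
   Context: A Nash equilibrium is a pair $(\Lambda_1^*,\Lambda_2^* )\in[0,N_1]\times[0,N_2]$ such that $\Lambda_1^*$ maximizes $U_1(\cdot,\Lambda_2^* )$ over $[0,N_1]$ and $\Lambda_2^*$ maximizes $U_2(\Lambda_1^*,\cdot)$ over $[0,N_2]$. Here $\log$ is the natural logarithm. *)

From HB Require Import structures.
From mathcomp Require Import all_boot all_order all_algebra.
From mathcomp Require Import all_classical all_reals all_analysis.
Set Implicit Arguments. Unset Strict Implicit. Unset Printing Implicit Defensive.
Import Order.TTheory GRing.Theory Num.Theory.
Import numFieldNormedType.Exports.
Local Open Scope classical_set_scope.
Local Open Scope ring_scope.

Definition rag_payoff (R : realType) (alpha L1 L2 Li : R) : R :=
  sup [set Li * ln (1 + b) * expR (- (L1 + L2) * b `^ (2 / alpha))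
       | b in [set b : R | 0 < b]].

Definition U1 (R : realType) (alpha L1 L2 : R) : R := rag_payoff alpha L1 L2 L1.
Definition U2 (R : realType) (alpha L1 L2 : R) : R := rag_payoff alpha L1 L2 L2.

Definition is_nash (R : realType) (alpha N1 N2 L1 L2 : R) : Prop :=
  [/\ 0 <= L1 <= N1, 0 <= L2 <= N2,
      (forall x, 0 <= x <= N1 -> U1 alpha x L2 <= U1 alpha L1 L2) &
      (forall y, 0 <= y <= N2 -> U2 alpha L1 y <= U2 alpha L1 L2)].

(* Against a total load S = x + L, a player of rate x earns x * F(S) with
   F(S) = sup_b ln (1 + b) * exp (- S * b^(2/alpha)).  Splitting the b's at the
   peak of b * exp (- S * b^(2/alpha)) gives the elasticity bounds
   F(S + h) >= F(S) * exp (- h * alpha / (2 S)) and, for every th < alpha / 2 and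
   S large, F(S - h) >= F(S) * exp (h * th / S).  Perturbing a best response x
   by +-h therefore shows x + L <= (alpha / 2) x unless x is at its cap, and
   th x <= x + L for large loads.  As alpha / 2 < 2 the two players cannot both
   be interior, so player 1 is capped at N, while player 2's rate is squeezed
   between min (c N, N / (alpha / 2 - 1)) and N / (th - 1) for th -> alpha / 2. *)

From HB Require Import structures.
From mathcomp Require Import all_boot all_order all_algebra.
From mathcomp Require Import all_classical all_reals all_analysis.
From mathcomp Require Import ring lra.
Import Order.TTheory GRing.Theory Num.Theory.
Import numFieldNormedType.Exports.
Local Open Scope classical_set_scope.
Local Open Scope ring_scope.

Set Implicit Arguments. Unset Strict Implicit. Unset Printing Implicit Defensive.

Section RealFacts.
Variable R : realType.
Implicit Types a x y r s t p : R.

Lemma ln_le_subr1 x : 0 < x -> ln x <= x - 1.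
Proof. by move=> x0; have := @le_ln1Dx R (x - 1); rewrite addrCA subrr addr0; apply; lra. Qed.

Lemma ln_lt_subr1 x : 0 < x -> x != 1 -> ln x < x - 1.
Proof.
move=> x0 x1; have := @expR_gt1Dx R (ln x).
by rewrite lnK ?posrE // ln_eq0 // => /(_ x1); lra.
Qed.

Lemma ln1Dx_ge_div x : 0 <= x -> x / (1 + x) <= ln (1 + x).
Proof.
move=> x0; have x1 : 0 < 1 + x by lra.
have := @ln_le_subr1 (1 + x)^-1; rewrite lnV ?posrE ?invr_gt0 // => /(_ x1).
have -> : (1 + x)^-1 - 1 = - (x / (1 + x)) by field; rewrite lt0r_neq0.
lra.
Qed.

(* concavity of ln, applied at 1 + r x and 1 with weight 1/r *)
Lemma ln1Dmul_le r x : 1 <= r -> 0 <= x -> ln (1 + r * x) <= r * ln (1 + x).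
Proof.
move=> r1 x0; have r0 : 0 < r by lra.
have t0 : 0 <= r^-1 by rewrite invr_ge0 ltW.
have t1 : r^-1 <= 1 by rewrite invf_le1.
have rx1 : 0 < 1 + r * x by have := mulr_ge0 (ltW r0) x0; lra.
have := @concave_ln R (Itv01 t0 t1) (1 + r * x) 1 rx1 ltr01.
rewrite !convRE /= ln1 mulr0 addr0.
have -> : r^-1 * (1 + r * x) + (1 - r^-1) * 1 = 1 + x by field; rewrite lt0r_neq0.
by rewrite -ler_pdivrMl // mulrC.
Qed.

Lemma ln_sub_id_le s t : 0 < s -> s <= t -> t <= 1 -> ln s - s <= ln t - t.
Proof.
move=> s0 st t1; have t0 : 0 < t by lra.
have := ln_le_subr1 (divr_gt0 s0 t0); rewrite ln_div ?posrE //.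
have : s / t - 1 <= s - t.
  have -> : s / t - 1 = (s - t) / t by field; rewrite lt0r_neq0.
  by rewrite ler_pdivrMr //; nra.
lra.
Qed.

(* ln r = p ln (r^(1/p)) <= p (r^(1/p) - 1) *)
Lemma mul_expR_powR_le p r : 0 < p -> 0 < r ->
  r * expR (- (p * r `^ p^-1)) <= expR (- p).
Proof.
move=> p0 r0; set u := r `^ p^-1.
have u0 : 0 < u by rewrite powR_gt0.
have lnr : ln r = p * ln u by rewrite ln_powR mulrA divff ?mul1r // lt0r_neq0.
have : ln r <= p * u - p by rewrite lnr; have := ln_le_subr1 u0; nra.
rewrite -ler_expR lnK ?posrE // => le_r.
have := ler_wpM2r (ltW (expR_gt0 (- (p * u)))) le_r.
by rewrite -expRD; congr (_ <= expR _); ring.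
Qed.

Lemma sup_pmull x (E : set R) : 0 < x -> has_sup E ->
  sup [set x * e | e in E] = x * sup E.
Proof.
move=> x0 [E0 Eub]; have xE0 : [set x * e | e in E] !=set0 by exact: image_nonempty.
have xEub : has_ubound [set x * e | e in E].
  by have [M EM] := Eub; exists (x * M) => _ [e Ee <-]; rewrite ler_pM2l // EM.
apply/eqP; rewrite eq_le; apply/andP; split.
  by apply: ge_sup => // _ [e Ee <-]; rewrite ler_pM2l //; exact: ub_le_sup.
rewrite -ler_pdivlMl //; apply: ge_sup => // e Ee.
by rewrite ler_pdivlMl //; apply: ub_le_sup => //; exists e.
Qed.

Lemma mul_expRN_le_div a x y : 0 < a -> a + x <= y ->
  a * expR (- y) <= a / (1 + a) * expR (- x).
Proof.
move=> a0 axy.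
have e1 : expR (- y) <= expR (- a) * expR (- x) by rewrite -expRD ler_expR; lra.
have e2 : expR (- a) <= (1 + a)^-1.
  by rewrite expRN lef_pV2 ?posrE ?expR_gt0 ?expR_ge1Dx //; lra.
apply: (le_trans (ler_wpM2l (ltW a0) e1)).
by rewrite mulrA ler_pM2r ?expR_gt0 // ler_pM2l.
Qed.

End RealFacts.

Section RagValue.
Variables (R : realType) (alpha : R).
Hypothesis alpha_gt2 : 2 < alpha.
Implicit Types S h b : R.

Let alpha_gt0 : 0 < alpha. Proof. by have := alpha_gt2; lra. Qed.
Let half_alpha_gt1 : 1 < alpha / 2. Proof. by have := alpha_gt2; lra. Qed.
Let half_alpha_gt0 : 0 < alpha / 2. Proof. by have := half_alpha_gt1; lra. Qed.

Definition rag_term S b := ln (1 + b) * expR (- S * b `^ (2 / alpha)).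

Definition rag_value S := sup [set rag_term S b | b in [set b : R | 0 < b]].

(* the maximiser of b * expR (- S * b `^ (2 / alpha)) *)
Definition rag_peak S := (alpha / 2 / S) `^ (alpha / 2).

Lemma rag_term_gt0 S b : 0 < b -> 0 < rag_term S b.
Proof. by move=> b0; rewrite mulr_gt0 ?expR_gt0 // ln_gt0 //; lra. Qed.

Lemma rag_term_shift S h b :
  rag_term S b = rag_term (S + h) b * expR (h * b `^ (2 / alpha)).
Proof. by rewrite /rag_term -mulrA -expRD; congr (_ * expR _); ring. Qed.

Lemma rag_term_le_id S b : 0 <= S -> 0 < b -> rag_term S b <= b.
Proof.
move=> S0 b0; have ln0 : 0 <= ln (1 + b) by apply: ln_ge0; lra.
have ln_le : ln (1 + b) <= b by apply: le_ln1Dx; lra.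
have e1 : expR (- S * b `^ (2 / alpha)) <= 1.
  by rewrite expR_le1 mulNr oppr_le0 mulr_ge0 ?powR_ge0.
by have := ler_wpM2l ln0 e1; rewrite /rag_term; lra.
Qed.

Lemma rag_term_nonincreasing S S' b : 0 < b -> S <= S' -> rag_term S' b <= rag_term S b.
Proof.
move=> b0 SS'; rewrite (rag_term_shift S' (S - S')) addrC subrK.
rewrite ler_piMr ?(ltW (rag_term_gt0 _ b0)) // expR_le1.
by rewrite mulr_le0_ge0 ?powR_ge0 //; lra.
Qed.

Lemma rag_peak_gt0 S : 0 < S -> 0 < rag_peak S.
Proof. by move=> S0; rewrite powR_gt0 // divr_gt0. Qed.

Lemma powR_rag_peak S : 0 < S -> rag_peak S `^ (2 / alpha) = alpha / 2 / S.
Proof.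
move=> S0; rewrite -powRrM.
have -> : alpha / 2 * (2 / alpha) = 1 by field; rewrite lt0r_neq0.
by rewrite powRr1 // ltW // divr_gt0.
Qed.

Lemma rag_term_peak S : 0 < S ->
  rag_term S (rag_peak S) = ln (1 + rag_peak S) * expR (- (alpha / 2)).
Proof.
move=> S0; rewrite /rag_term powR_rag_peak // mulNr; congr (_ * expR (- _)).
by field; rewrite lt0r_neq0.
Qed.

Lemma rag_peak_le S : alpha / 2 <= S -> rag_peak S <= alpha / 2 / S.
Proof.
move=> pS; have S0 : 0 < S := lt_le_trans half_alpha_gt0 pS.
apply: ge1r_powR; last exact: ltW.
by rewrite divr_gt0 //= ler_pdivrMr // mul1r.
Qed.

(* Writing b = r * rag_peak S with r >= 1, the logarithm grows at most by the
   factor r while the exponential shrinks by more than 1/r. *)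
Lemma rag_term_le_peak S b : 0 < S -> rag_peak S <= b ->
  rag_term S b <= rag_term S (rag_peak S).
Proof.
move=> S0 b1b; set b1 := rag_peak S; have b10 : 0 < b1 := rag_peak_gt0 S0.
set r := b / b1; have r1 : 1 <= r by rewrite ler_pdivlMr // mul1r.
have r0 : 0 < r by lra.
have br : b = r * b1 by rewrite divfK // lt0r_neq0.
have ln_le : ln (1 + b) <= r * ln (1 + b1) by rewrite br ln1Dmul_le //; lra.
have exp_le : r * expR (- S * b `^ (2 / alpha)) <= expR (- (alpha / 2)).
  have -> : - S * b `^ (2 / alpha) = - (alpha / 2 * r `^ (alpha / 2)^-1).
    rewrite br powRM ?ltW // powR_rag_peak // invf_div; field; exact: lt0r_neq0.
  exact: mul_expR_powR_le.
rewrite rag_term_peak //; have ln0 : 0 <= ln (1 + b1) by apply: ln_ge0; lra.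
apply: (le_trans (ler_wpM2r (ltW (expR_gt0 _)) ln_le)).
by have := ler_wpM2l ln0 exp_le; rewrite mulrA [ln _ * r]mulrC.
Qed.

Lemma rag_term_le_rag_peak S b : 0 < S -> 0 < b -> rag_term S b <= rag_peak S.
Proof.
move=> S0 b0; have b10 := rag_peak_gt0 S0.
case: (leP (rag_peak S) b) => [b1b|bb1].
  by apply: le_trans (rag_term_le_peak S0 b1b) _; apply: rag_term_le_id; lra.
by apply: le_trans (rag_term_le_id _ _) _; lra.
Qed.

Lemma has_sup_rag_term S : 0 < S -> has_sup [set rag_term S b | b in [set b | 0 < b]].
Proof.
move=> S0; split; first by exists (rag_term S 1), 1 => //=.
by exists (rag_peak S) => _ [b b0 <-]; exact: rag_term_le_rag_peak.
Qed.

Lemma rag_term_le_value S b : 0 < S -> 0 < b -> rag_term S b <= rag_value S.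
Proof. by move=> S0 b0; apply: ub_le_sup; [case: (has_sup_rag_term S0)|exists b]. Qed.

Lemma rag_value_le S M : (forall b, 0 < b -> rag_term S b <= M) -> rag_value S <= M.
Proof.
move=> le_M; apply: ge_sup; first by exists (rag_term S 1), 1 => //=.
by move=> _ [b b0 <-]; exact: le_M.
Qed.

Lemma rag_value_gt0 S : 0 < S -> 0 < rag_value S.
Proof. by move=> S0; apply: lt_le_trans (rag_term_gt0 S ltr01) (rag_term_le_value S0 ltr01). Qed.

Lemma rag_value_ge_peak S S' : 0 < S' <= S ->
  rag_peak S / (1 + rag_peak S) * expR (- (alpha / 2)) <= rag_value S'.
Proof.
move=> /andP[S'0 S'S]; have b10 := rag_peak_gt0 (lt_le_trans S'0 S'S).
apply: le_trans (rag_term_le_value S'0 b10).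
apply: le_trans (rag_term_nonincreasing b10 S'S).
rewrite rag_term_peak; last lra.
by rewrite ler_wpM2r ?expR_ge0 // ln1Dx_ge_div // ltW.
Qed.

Lemma rag_value_shift_up S h : 0 < S -> 0 <= h ->
  rag_value S * expR (- (h * (alpha / 2 / S))) <= rag_value (S + h).
Proof.
move=> S0 h0; rewrite expRN ler_pdivrMr ?expR_gt0 //.
have Sh0 : 0 < S + h by lra.
have near_peak b : 0 < b -> b `^ (2 / alpha) <= alpha / 2 / S ->
    rag_term S b <= rag_value (S + h) * expR (h * (alpha / 2 / S)).
  move=> b0 bS; rewrite (rag_term_shift S h).
  apply: ler_pM; rewrite ?(ltW (rag_term_gt0 _ _)) ?expR_ge0 ?rag_term_le_value //.
  by rewrite ler_expR ler_wpM2l.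
apply: rag_value_le => b b0; have b10 := rag_peak_gt0 S0.
case: (leP b (rag_peak S)) => [bb1|b1b].
  apply: near_peak => //; rewrite -powR_rag_peak //.
  by apply: ge0_ler_powR; rewrite ?nnegrE ?divr_ge0 // ltW.
apply: le_trans (rag_term_le_peak S0 (ltW b1b)) _.
by apply: near_peak => //; rewrite powR_rag_peak.
Qed.

Lemma rag_term_le_small S b s : 0 < S -> 0 < b -> 0 < s <= 1 ->
  S * b `^ (2 / alpha) <= alpha / 2 * s ->
  rag_term S b <= rag_peak S * expR (alpha / 2 * (ln s - s)).
Proof.
move=> S0 b0 /andP[s0 s1] us; set u := S * b `^ (2 / alpha) in us.
have u0 : 0 < u by rewrite mulr_gt0 ?powR_gt0.
set s' := u / (alpha / 2).
have s'0 : 0 < s' by rewrite divr_gt0.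
have s's : s' <= s by rewrite ler_pdivrMr // mulrC.
have u_eq : u = alpha / 2 * s' by rewrite mulrC divfK ?lt0r_neq0.
have b_eq : b = rag_peak S * expR (alpha / 2 * ln s').
  rewrite -ln_powR lnK ?posrE ?powR_gt0 // -powRM ?divr_ge0 ?ltW //.
  have -> : alpha / 2 / S * s' = b `^ (2 / alpha).
    by rewrite /s' /u; field; rewrite !lt0r_neq0.
  rewrite -powRrM (_ : 2 / alpha * (alpha / 2) = 1) ?powRr1 ?ltW //.
  by field; rewrite lt0r_neq0.
have T_le : rag_term S b <= b * expR (- u).
  by rewrite /rag_term mulNr ler_wpM2r ?expR_ge0 // le_ln1Dx //; lra.
apply: le_trans T_le _; rewrite {1}b_eq -mulrA ler_pM2l ?rag_peak_gt0 //.
rewrite -expRD ler_expR u_eq -mulrN -mulrDr ler_pM2l //.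
exact: ln_sub_id_le.
Qed.

(* Where b `^ (2 / alpha) >= th / S the shift identity gives the factor
   directly.  For smaller b the term is at most the fraction expR (- alpha / 2 * m)
   of the peak value, and this fixed gap absorbs both the factor
   expR (h * th / S) and the loss ln (1 + peak) vs. peak once S is large and
   h / S is small. *)
Lemma rag_value_shift_down th : 1 < th < alpha / 2 -> exists S0 eta, 0 < eta /\
  forall S h, S0 <= S -> 0 <= h <= eta * S -> h < S ->
  rag_value S * expR (h * (th / S)) <= rag_value (S - h).
Proof.
move=> /andP[th1 thp]; have th0 : 0 < th by lra.
set s := th / (alpha / 2).
have s0 : 0 < s by rewrite divr_gt0.
have s1 : s < 1 by rewrite ltr_pdivrMr // mul1r.
set m := s - ln s - 1.
have m0 : 0 < m by have := ln_lt_subr1 s0 (negbT (lt_eqF s1)); rewrite /m; lra.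
exists (alpha / 2 + 2 / m), (alpha / 2 * m / (2 * th)); split.
  by rewrite divr_gt0 ?mulr_gt0.
move=> S h hS /andP[h0 hSeta] hSS.
have m2 : 0 < 2 / m by rewrite divr_gt0.
have pS : alpha / 2 <= S by have := m2; lra.
have S0 : 0 < S := lt_le_trans half_alpha_gt0 pS.
rewrite -ler_pdivlMr ?expR_gt0 // -expRN.
apply: rag_value_le => b b0.
case: (leP (th / S) (b `^ (2 / alpha))) => [large|small].
  rewrite (rag_term_shift S (- h)); apply: ler_pM.
  - exact: ltW (rag_term_gt0 _ b0).
  - exact: expR_ge0.
  - by apply: rag_term_le_value; lra.
  - by rewrite ler_expR mulNr lerN2 ler_wpM2l.
have us : S * b `^ (2 / alpha) <= alpha / 2 * s.
  by rewrite [alpha / 2 * s]mulrC divfK ?lt0r_neq0 // mulrC -ler_pdivlMr // ltW.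
apply: le_trans (rag_term_le_small S0 b0 _ us) _; first by rewrite s0 ltW.
have peak_le : rag_peak S <= alpha / 2 * m / 2.
  have mS : 2 <= S * m by rewrite -ler_pdivrMr //; lra.
  apply: le_trans (rag_peak_le pS) _; rewrite ler_pdivrMr //.
  by have := half_alpha_gt0; nra.
have h_le : h * (th / S) <= alpha / 2 * m / 2.
  have := ler_wpM2r (ltW (divr_gt0 th0 S0)) hSeta.
  rewrite (_ : alpha / 2 * m / (2 * th) * S * (th / S) = alpha / 2 * m / 2) //.
  by field; rewrite !lt0r_neq0.
have gap : rag_peak S * expR (- (alpha / 2 * m))
    <= rag_peak S / (1 + rag_peak S) * expR (- (h * (th / S))).
  by apply: mul_expRN_le_div; [exact: rag_peak_gt0 | lra].
have -> : rag_peak S * expR (alpha / 2 * (ln s - s))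
    = rag_peak S * expR (- (alpha / 2 * m)) * expR (- (alpha / 2)).
  by rewrite -[RHS]mulrA -expRD /m; congr (_ * expR _); ring.
apply: le_trans (ler_wpM2r (ltW (expR_gt0 _)) gap) _.
rewrite mulrAC; apply: ler_wpM2r; first exact: expR_ge0.
apply: rag_value_ge_peak.
by rewrite subr_gt0 hSS /=; lra.
Qed.

End RagValue.

Lemma rag_payoffE (R : realType) (alpha L1 L2 Li : R) : 2 < alpha ->
  0 <= Li -> Li <= L1 + L2 -> rag_payoff alpha L1 L2 Li = Li * rag_value alpha (L1 + L2).
Proof.
move=> a2 Li0 LiS; set E := [set rag_term alpha (L1 + L2) b | b in [set b : R | 0 < b]].
have -> : rag_payoff alpha L1 L2 Li = sup [set Li * e | e in E].
  by rewrite /rag_payoff image_comp; congr sup; apply: eq_imagel => b _ /=; rewrite mulrA.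
case: (ltrgt0P Li) Li0 => [Li_gt0 _|//|->]; first by rewrite sup_pmull //; apply: has_sup_rag_term; lra.
have -> : [set 0 * e | e in E] = [set 0].
  apply/seteqP; split=> [_ [e _ <-]|_ ->] /=; first by rewrite mul0r.
  by exists (rag_term alpha (L1 + L2) 1); [exists 1 => //= | rewrite mul0r].
by rewrite sup1 mul0r.
Qed.

Section RagGame.
Variables (R : realType) (alpha : R).
Hypothesis alpha_gt2 : 2 < alpha.
Implicit Types M L N x y : R.

Let half_alpha_gt0 : 0 < alpha / 2. Proof. by have := alpha_gt2; lra. Qed.

Definition best_response M L x := 0 <= x <= M /\
  forall y, 0 <= y <= M -> y * rag_value alpha (y + L) <= x * rag_value alpha (x + L).

Lemma is_nash_best_response N1 N2 L1 L2 : is_nash alpha N1 N2 L1 L2 ->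
  best_response N1 L2 L1 /\ best_response N2 L1 L2.
Proof.
case=> /andP[L10 L1N] /andP[L20 L2N] br1 br2.
split; split; rewrite ?L10 ?L1N ?L20 ?L2N // => y /andP[y0 yN].
  have := br1 y; rewrite /U1 !rag_payoffE ?y0 ?yN //; lra.
have := br2 y; rewrite /U2 !rag_payoffE ?y0 ?yN // ![L1 + _]addrC; lra.
Qed.

Lemma best_response_not_improvable M L x y k : best_response M L x -> 0 <= y <= M ->
  0 < x + L -> x < y * (1 + k) ->
  rag_value alpha (x + L) * (1 + k) <= rag_value alpha (y + L) -> False.
Proof.
move=> [_ best] yM S0 gain shift; have := best y yM; rewrite leNgt => /negP; apply.
have F0 := rag_value_gt0 alpha_gt2 S0.
apply: (@lt_le_trans _ _ (y * (1 + k) * rag_value alpha (x + L))); first by rewrite ltr_pM2r.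
case/andP: yM => y0 _; rewrite -mulrA; apply: ler_wpM2l => //.
by rewrite mulrC.
Qed.

Lemma best_response_gt0 M L x : 0 < M -> 0 <= L -> best_response M L x -> 0 < x.
Proof.
move=> M0 L0 [/andP[x0 _] best]; rewrite lt0r x0 andbT; apply/eqP => x_eq0.
have := best M; rewrite lexx ltW // x_eq0 mul0r => /(_ isT).
by rewrite pmulr_rle0 // leNgt rag_value_gt0 //; lra.
Qed.

Lemma best_response_interior M L x : 0 <= L -> best_response M L x -> 0 < x -> x < M ->
  x + L <= alpha / 2 * x.
Proof.
move=> L0 br x0 xM; rewrite leNgt; apply/negP => px_lt.
set S := x + L in px_lt *; have S0 : 0 < S by rewrite /S; lra.
near (0 : R)^'+ => h.
have h0 : 0 < h by near: h; exact: nbhs_right_gt.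
have hM : h < M - x by near: h; apply: nbhs_right_lt; lra.
have hS : h < S / (alpha / 2) - x.
  by near: h; apply: nbhs_right_lt; rewrite subr_gt0 ltr_pdivlMr // mulrC.
set q := h * (alpha / 2 / S).
have gain : x < (x + h) * (1 - q).
  rewrite (_ : (x + h) * (1 - q) = x + h / S * (S - (x + h) * (alpha / 2))); last first.
    by rewrite /q; field; rewrite lt0r_neq0.
  rewrite ltrDl mulr_gt0 ?divr_gt0 // subr_gt0 -ltr_pdivlMr //; lra.
have up : rag_value alpha S * expR (- q) <= rag_value alpha (S + h).
  exact: rag_value_shift_up.
have xhM : 0 <= x + h <= M by apply/andP; split; lra.
apply: (best_response_not_improvable br xhM S0 gain).
rewrite (_ : x + h + L = S + h); last by rewrite /S; ring.
by apply: le_trans up; rewrite ler_pM2l ?rag_value_gt0 // expR_ge1Dx.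
Unshelve. all: by end_near.
Qed.

Lemma best_response_share_le th : 1 < th < alpha / 2 -> exists S0, forall M L x,
  0 <= L -> best_response M L x -> 0 < x -> S0 <= x + L -> th * x <= x + L.
Proof.
move=> th_bnd; have th0 : 0 < th by case/andP: th_bnd; lra.
have [Smin [eta [eta0 down]]] := rag_value_shift_down alpha_gt2 th_bnd.
exists Smin => M L x L0 br x0 S_large; rewrite leNgt; apply/negP => thx_gt.
set S := x + L in thx_gt S_large *; have S0 : 0 < S by rewrite /S; lra.
near (0 : R)^'+ => h.
have h0 : 0 < h by near: h; exact: nbhs_right_gt.
have h_eta : h < eta * S by near: h; apply: nbhs_right_lt; rewrite mulr_gt0.
have hx : h < x by near: h; exact: nbhs_right_lt.
have h_th : h < x - S / th.
  by near: h; apply: nbhs_right_lt; rewrite subr_gt0 ltr_pdivrMr // mulrC.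
set q := h * (th / S).
have gain : x < (x - h) * (1 + q).
  rewrite (_ : (x - h) * (1 + q) = x + h / S * ((x - h) * th - S)); last first.
    by rewrite /q; field; rewrite lt0r_neq0.
  by rewrite ltrDl mulr_gt0 ?divr_gt0 // subr_gt0 -ltr_pdivrMr //; lra.
have dn : rag_value alpha S * expR q <= rag_value alpha (S - h).
  by apply: down => //; rewrite ?ltW ?h_eta //= /S; lra.
have xhM : 0 <= x - h <= M by case: br => /andP[_ xM] _; apply/andP; split; lra.
apply: (best_response_not_improvable br xhM S0 gain).
rewrite (_ : x - h + L = S - h); last by rewrite /S; ring.
by apply: le_trans dn; rewrite ler_pM2l ?rag_value_gt0 // expR_ge1Dx.
Unshelve. all: by end_near.
Qed.

Lemma rag_nash_shape N N2 L1 L2 : alpha < 4 -> 0 < N -> N <= N2 ->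
  is_nash alpha N N2 L1 L2 -> [/\ L1 = N, 0 < L2 & L2 = N2 \/ N + L2 <= alpha / 2 * L2].
Proof.
move=> alpha_lt4 N0 NN2 nash; have [br1 br2] := is_nash_best_response nash.
have [/andP[L10 L1N] /andP[L20 L2N] _ _] := nash.
have L1_gt0 : 0 < L1 by apply: best_response_gt0 br1.
have L2_gt0 : 0 < L2 by apply: best_response_gt0 br2; lra.
have int1 := best_response_interior (ltW L2_gt0) br1 L1_gt0.
have int2 := best_response_interior (ltW L1_gt0) br2 L2_gt0.
have half_alpha_lt2 : alpha / 2 < 2 by lra.
(* if player 1 were interior, player 2 would be too, forcing alpha / 2 >= 2 *)
have L1E : L1 = N.
  apply/eqP; rewrite eq_le L1N leNgt; apply/negP => /int1 sum1.
  have /int2 sum2 : L2 < N2 by nra.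
  nra.
split => //; case: (ltP L2 N2) => [/int2|N2L2]; last by left; apply/eqP; rewrite eq_le L2N.
by rewrite addrC L1E; right.
Qed.

Lemma rag_nash_share_ge N N2 L1 L2 : alpha < 4 -> 0 < N -> N <= N2 ->
  is_nash alpha N N2 L1 L2 -> Num.min (N2 / N) (2 / (alpha - 2)) <= L2 / N.
Proof.
move=> alpha_lt4 N0 NN2 nash.
have [_ L2_gt0 [->|share]] := rag_nash_shape alpha_lt4 N0 NN2 nash; rewrite ge_min ?lexx //.
by apply/orP; right; rewrite ler_pdivrMr ?subr_gt0 // mulrAC ler_pdivlMr //; lra.
Qed.

Lemma rag_nash_share_le e : alpha < 4 -> 0 < e -> exists S0, forall N N2 L1 L2,
  0 < N -> N <= N2 -> S0 <= N -> is_nash alpha N N2 L1 L2 -> L2 / N <= 2 / (alpha - 2) + e.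
Proof.
move=> alpha_lt4 e0; set k := 2 / (alpha - 2).
have k0 : 0 < k by rewrite divr_gt0 // subr_gt0.
have ke0 : 0 < k + e by lra.
have th_bnd : 1 < 1 + (k + e)^-1 < alpha / 2.
  have : (k + e)^-1 < k^-1 by rewrite ltf_pV2 ?posrE //; lra.
  rewrite /k invf_div ltrDl invr_gt0 ke0 /=; lra.
have [S0 share] := best_response_share_le th_bnd.
exists S0 => N N2 L1 L2 N0 NN2 S0N nash.
have [L1E L2_gt0 _] := rag_nash_shape alpha_lt4 N0 NN2 nash.
have [_ br2] := is_nash_best_response nash.
have le_N : (1 + (k + e)^-1) * L2 <= L2 + N.
  by rewrite -L1E; apply: (share _ _ _ _ br2 L2_gt0); rewrite L1E; lra.
have : (k + e)^-1 * L2 <= N by lra.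
by rewrite -ler_pdivlMl ?invr_gt0 // invrK ler_pdivrMr // mulrC.
Qed.

End RagGame.

Unset Implicit Arguments.

Theorem theorem3 (R : realType) (alpha c : R) (Lam1 Lam2 : R -> R) :
  2 < alpha < 4 -> 1 <= c ->
  (forall N1 : R, 0 < N1 -> is_nash alpha N1 (c * N1) (Lam1 N1) (Lam2 N1)) ->
  (\forall N1 \near +oo, Lam1 N1 = N1) /\
  (Lam2 N1 / N1 @[N1 --> +oo] --> Num.min c (2 / (alpha - 2))).
Proof.
move=> /andP[alpha_gt2 alpha_lt4] c1 nash.
have le_cN N : 0 < N -> N <= c * N by move=> N0; rewrite ler_peMl // ltW.
split.
  near=> N; have N0 : 0 < N by near: N; apply: nbhs_pinfty_gt; rewrite num_real.
  by have [] := rag_nash_shape alpha_gt2 alpha_lt4 N0 (le_cN N N0) (nash N N0).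
apply/cvgrPdist_le => e e0.
have [S0 share_le] := rag_nash_share_le alpha_gt2 alpha_lt4 e0.
near=> N; have N0 : 0 < N by near: N; apply: nbhs_pinfty_gt; rewrite num_real.
have S0N : S0 <= N by near: N; apply: nbhs_pinfty_ge; rewrite num_real.
have lo := rag_nash_share_ge alpha_gt2 alpha_lt4 N0 (le_cN N N0) (nash N N0).
have hi := share_le _ _ _ _ N0 (le_cN N N0) S0N (nash N N0).
have [_ /andP[_ L2_le] _ _] := nash N N0.
have le_c : Lam2 N / N <= c by rewrite ler_pdivrMr.
rewrite mulfK ?lt0r_neq0 // in lo.
rewrite ler_norml; case: (leP c (2 / (alpha - 2))) => [ck|kc].
  by rewrite (min_l ck) in lo; lra.
by rewrite (min_r (ltW kc)) in lo; lra.
Unshelve. all: by end_near.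
Qed.
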